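(* Let $P^{(1)},\dots,P^{(m)}\in\{I,X,Y,Z\}^n$ be phase-free Pauli strings. Consider the certification procedure: maintain a dictionary $D$ from labeled patterns $(A,a)$ (with $A\subseteq\{1,\dots,n\}$, $a:A\to\{X,Y,Z\}$) to integers, initially zero, and a counter $N=0$. For $i=1,\dots,m$: with $P=P^{(i)}$ compute $c=(N-Z)/2$ where $Z=\sum_{A\subseteq\operatorname{supp}(P)}(-2)^{|A|}\sum_{a\in\mathcal{L}_P(A)}D[(A,a)]$ and $\mathcal{L}_P(A)=\{a:A\to\{X,Y,Z\}: a(j)\neq P_j\ \forall j\in A\}$; if $c>0$, scan $j=1,\dots,i-1$, testing whether $|\operatorname{conf}(P^{(j)},P^{(i)})|$ is odd, and return the first pair $(j,i)$ for which it is; otherwise increment $D[(A,P^{(i)}|_A)]$ by one for every $A\subseteq\operatorname{supp}(P^{(i)})$ and set $N\leftarrow N+1$. If the loop finishes, return ``all commute''. Then this procedure returns ``all commute'' if and only if all the input strings pairwise commute, and if it returns a pair $(j,i)$, then $P^{(j)}P^{(i)}=-P^{(i)}P^{(j)}$.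
   Context: A phase-free $n$-qubit Pauli string is a word $P=(P_1,\dots,P_n)\in\{I,X,Y,Z\}^n$ with $I,X,Y,Z$ the identity and the three Pauli matrices, identified with $P_1\otimes\cdots\otimes P_n$. Its support is $\operatorname{supp}(P)=\{j: P_j\neq I\}$. The conflict set of $P,Q$ is $\operatorname{conf}(P,Q)=\{j: P_j\neq I,\ Q_j\neq I,\ P_j\neq Q_j\}$; two Pauli strings anticommute exactly when their conflict set has odd size and commute otherwise. *)

From HB Require Import structures.
From mathcomp Require Import all_boot all_order all_algebra all_field.
Set Implicit Arguments. Unset Strict Implicit. Unset Printing Implicit Defensive.
Import Order.TTheory GRing.Theory Num.Theory.

Inductive pauli := PI | PX | PY | PZ.

Definition pauli_to_ord (p : pauli) : 'I_4 :=
  match p with PI => inord 0 | PX => inord 1 | PY => inord 2 | PZ => inord 3 end.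
Definition ord_to_pauli (k : 'I_4) : pauli :=
  match val k with 0 => PI | 1 => PX | 2 => PY | _ => PZ end.
Lemma pauli_to_ordK : cancel pauli_to_ord ord_to_pauli.
Proof. by case; rewrite /ord_to_pauli /= inordK. Qed.

HB.instance Definition _ := Finite.copy pauli (can_type pauli_to_ordK).

Definition pstring (n : nat) := {ffun 'I_n -> pauli}.

Definition supp n (P : pstring n) : {set 'I_n} := [set j | P j != PI].

Definition conf n (P Q : pstring n) : {set 'I_n} :=
  [set j | [&& P j != PI, Q j != PI & P j != Q j]].

Definition anticommb n (P Q : pstring n) : bool := odd #|conf P Q|.

Local Open Scope ring_scope.

(* entry (r,c) of the 2x2 Pauli matrix, with basis index false = |0>, true = |1> *)
Definition sigma (p : pauli) (r c : bool) : algC :=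
  match p with
  | PI => if r == c then 1 else 0
  | PX => if r == c then 0 else 1
  | PY => if r == c then 0 else (if r then 'i else - 'i)
  | PZ => if r == c then (if r then -1 else 1) else 0
  end.

(* bit of basis index r : 'I_(2^n) for qubit k (qubit 0 is the most significant) *)
Definition qbit n (r : 'I_(2 ^ n)) (k : 'I_n) : bool := odd (r %/ 2 ^ (n - k.+1))%N.

(* the matrix P_1 (x) ... (x) P_n in 'M_(2^n), entrywise *)
Definition pmx n (P : pstring n) : 'M[algC]_(2 ^ n) :=
  \matrix_(r, c) \prod_(k < n) sigma (P k) (qbit r k) (qbit c k).

(* A labeled pattern (A,a), A ⊆ {1..n}, a : A -> {X,Y,Z}, is encoded as the
   Pauli string equal to a(j) on A and I outside A (a bijection). *)
Definition pattern n (A : {set 'I_n}) (a : pstring n) : bool :=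
  (supp a == A).

Definition LP n (P : pstring n) (A : {set 'I_n}) : {set pstring n} :=
  [set a | pattern A a && [forall j in A, a j != P j]].

Definition restrict n (P : pstring n) (A : {set 'I_n}) : pstring n :=
  [ffun j => if j \in A then P j else PI].

Definition dict n := pstring n -> int.

Definition Zval n (D : dict n) (P : pstring n) : int :=
  \sum_(A : {set 'I_n} | A \subset supp P) (-2) ^+ #|A| * \sum_(a in LP P A) D a.

Definition cval n (D : dict n) (N : int) (P : pstring n) : rat :=
  (N - Zval D P)%:~R / 2.

Definition update n (D : dict n) (P : pstring n) : dict n :=
  fun a => D a + (#|[set A : {set 'I_n} | (A \subset supp P) && (a == restrict P A)]|)%:Z.

Inductive result := AllCommute | Pair of nat & nat | ScanFailed.

(* scan j = 1..i-1 over the previous strings, return the first (1-based) j with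
   |conf(P^(j), P^(i))| odd *)
Definition scan n (prev : seq (pstring n)) (P : pstring n) : option nat :=
  let k := find (fun Q => anticommb Q P) prev in
  if (k < size prev)%N then Some k.+1 else None.

(* prev = P^(1..i-1) already processed, rest = P^(i..m) still to process *)
Fixpoint run n (D : dict n) (N : int) (prev rest : seq (pstring n)) : result :=
  match rest with
  | [::] => AllCommute
  | P :: rest' =>
      if 0 < cval D N P then
        match scan prev P with
        | Some j => Pair j (size prev).+1
        | None => ScanFailed
        end
      else run (update D P) (N + 1) (rcons prev P) rest'
  end.

Definition certify n (Ps : seq (pstring n)) : result :=
  run (fun _ => 0) 0 [::] Ps.

Definition pid n : pstring n := [ffun => PI].

From HB Require Import structures.
From mathcomp Require Import all_boot all_order all_algebra all_field.
From mathcomp Require Import ring zify.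
Set Implicit Arguments. Unset Strict Implicit. Unset Printing Implicit Defensive.
Import GRing.Theory Num.Theory.
Local Open Scope ring_scope.

(* Once strings Q_1, ..., Q_N have been recorded, the only dictionary entries
   seen by Z(P) are the restrictions Q_k|_A with A a subset of conf(Q_k, P), so
   Q_k contributes sum_{A <= conf(Q_k,P)} (-2)^|A| = (-1)^|conf(Q_k,P)| to Z(P).
   Hence Z(P) = N - 2 #{k | Q_k anticommutes with P}: c counts the recorded
   strings anticommuting with P, the procedure stops exactly at the first
   string anticommuting with an earlier one, and the scan then finds a witness.
   On the matrix side, the product of two tensor products of Paulis factorises
   qubitwise, and two single-qubit Paulis anticommute exactly on a conflict. *)

Lemma sum_subset_expr (R : comPzSemiRingType) (I : finType) (C : {set I}) (x : R) :
  \sum_(A : {set I} | A \subset C) x ^+ #|A| = (1 + x) ^+ #|C|.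
Proof.
have := @bigA_distr R 0 1 *%R +%R I (fun i => if i \in C then x else 0) (fun _ => 1).
rewrite (eq_bigr (fun i => if i \in C then 1 + x else 1)); last first.
  by move=> i _; case: (i \in C) => /=; rewrite ?add0r // addrC.
rewrite -big_mkcond prodr_const => ->.
rewrite [LHS]big_mkcond; apply: eq_big => // A _.
rewrite -big_mkcond /=; case: (boolP (A \subset C)) => [AC | /subsetPn[i iA iC]].
  by rewrite (eq_bigr (fun _ => x)) ?prodr_const // => i /(subsetP AC) ->.
by rewrite (bigD1 i) //= (negbTE iC) mul0r.
Qed.

(* Equality on [pauli] is transported from ['I_4] through [inord], whose
   [idP] blocks computation; unfolding it lets [inordK] evaluate it. *)
Lemma pauli_eqE (p q : pauli) : (p == q) = (val (pauli_to_ord p) == val (pauli_to_ord q)).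
Proof. by []. Qed.

Definition sigma_mul (p q : pauli) (r c : bool) : algC :=
  \sum_(b : bool) sigma p r b * sigma q b c.

Lemma sigma_mulC_sign p q r c :
  sigma_mul p q r c = (-1) ^+ [&& p != PI, q != PI & p != q] * sigma_mul q p r c.
Proof.
rewrite /sigma_mul !big_bool.
by case: p; case: q; case: r; case: c; rewrite /sigma !pauli_eqE /= ?inordK //=; ring.
Qed.

Lemma eq_from_bits (n s t : nat) : (s < 2 ^ n)%N -> (t < 2 ^ n)%N ->
  (forall m, (m < n)%N -> odd (s %/ 2 ^ m) = odd (t %/ 2 ^ m)) -> s = t.
Proof.
elim: n s t => [|n IHn] s t; first by rewrite expn0 !ltnS !leqn0 => /eqP-> /eqP->.
move=> s_lt t_lt eq_bits.
have half_lt u : (u < 2 ^ n.+1)%N -> (u./2 < 2 ^ n)%N.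
  by rewrite -divn2 ltn_divLR // -expnSr.
rewrite -[s]odd_double_half -[t]odd_double_half.
have := eq_bits 0%N isT; rewrite expn0 !divn1 => ->.
congr (_ + _.*2); apply: IHn; rewrite ?half_lt // => m lt_mn.
by rewrite -!divn2 -!divnMA -expnS eq_bits.
Qed.

Definition qbits n (r : 'I_(2 ^ n)) : {ffun 'I_n -> bool} := [ffun k => qbit r k].

Lemma qbits_inj n : injective (@qbits n).
Proof.
move=> s t /ffunP eq_st; apply/val_inj/(@eq_from_bits n) => [||m lt_mn]; rewrite ?ltn_ord //.
have lt_k : (n - m.+1 < n)%N by lia.
have := eq_st (Ordinal lt_k); rewrite !ffunE /qbit /=.
by have -> : (n - (n - m.+1).+1 = m)%N by lia.
Qed.

Lemma qbits_bij n : bijective (@qbits n).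
Proof.
by apply: inj_card_bij; rewrite ?card_ffun ?card_bool ?card_ord //; apply: qbits_inj.
Qed.

Lemma pmx_mulmxE n (P Q : pstring n) r c :
  (pmx P *m pmx Q) r c = \prod_(k < n) sigma_mul (P k) (Q k) (qbit r k) (qbit c k).
Proof.
rewrite mxE bigA_distr_bigA /= (reindex (@qbits n)) /=; last first.
  by apply: onW_bij; apply: qbits_bij.
apply: eq_bigr => s _; rewrite !mxE -big_split /=.
by apply: eq_bigr => k _; rewrite ffunE.
Qed.

Lemma pmx_mulmxC_sign n (P Q : pstring n) :
  pmx P *m pmx Q = (-1) ^+ anticommb P Q *: (pmx Q *m pmx P).
Proof.
apply/matrixP => r c; rewrite /anticommb signr_odd [RHS]mxE !pmx_mulmxE.
under eq_bigr => k _ do rewrite sigma_mulC_sign.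
rewrite big_split /= -prodr_const [in RHS]big_mkcond; congr (_ * _).
by apply: eq_bigr => k _; rewrite inE; case: (_ && _).
Qed.

Section Dictionary.
Variable n : nat.
Implicit Types (P Q a : pstring n) (A : {set 'I_n}) (D : dict n).

Lemma supp_restrict Q A : supp (restrict Q A) = A :&: supp Q.
Proof. by apply/setP => j; rewrite !inE ffunE; case: (j \in A); rewrite ?eqxx. Qed.

Lemma conf_subr Q P : conf Q P \subset supp P.
Proof. by apply/subsetP => j; rewrite !inE => /and3P[]. Qed.

Lemma updateE D Q a : update D Q a = D a + (a == restrict Q (supp a)).
Proof.
have patterns_of_Q : [set A : {set 'I_n} | (A \subset supp Q) && (a == restrict Q A)] =
    if a == restrict Q (supp a) then [set supp a] else set0.
  apply/setP => A; rewrite inE.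
  have [eq_a | neq_a] := eqVneq a (restrict Q (supp a)); rewrite ?inE.
    apply/andP/eqP => [[sAQ /eqP ->] | ->].
      by rewrite supp_restrict; apply/esym/setIidPl.
    by rewrite -eq_a eqxx {1}eq_a supp_restrict subsetIr.
  apply/andP => -[sAQ /eqP eq_a]; move: neq_a.
  by rewrite {2}eq_a supp_restrict (setIidPl sAQ) -eq_a eqxx.
by rewrite /update patterns_of_Q; case: eqP; rewrite ?cards1 ?cards0.
Qed.

Lemma restrict_in_LP Q P A :
  A \subset supp P -> (restrict Q A \in LP P A) = (A \subset conf Q P).
Proof.
move=> sAP; rewrite inE /pattern supp_restrict.
apply/andP/subsetP => [[/eqP/setIidPl sAQ /forall_inP neqQP] j jA | sAconf].
  have := neqQP j jA; rewrite ffunE jA inE => ->.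
  by have := subsetP sAQ j jA; have := subsetP sAP j jA; rewrite !inE => -> ->.
split.
  by apply/eqP/setIidPl/subsetP => j /sAconf; rewrite !inE => /and3P[].
by apply/forall_inP => j jA; rewrite ffunE jA; have := sAconf j jA; rewrite inE => /and3P[].
Qed.

Lemma Zval_update D Q P : Zval (update D Q) P = Zval D P + (-1) ^+ anticommb Q P.
Proof.
have hits_restrict A : A \subset supp P ->
    \sum_(a in LP P A) ((a == restrict Q (supp a)) : int) = (A \subset conf Q P) :> int.
  move=> sAP; rewrite -restrict_in_LP //.
  under eq_bigr => a aLP.
    by move: aLP; rewrite inE /pattern => /andP[/eqP -> _]; over.
  have [rLP | rLP] := boolP (restrict Q A \in LP P A).
    by rewrite (bigD1 _ rLP) eqxx big1 ?addr0 // => a /andP[_ /negbTE->].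
  by rewrite big1 // => a aLP; case: eqP aLP rLP => // ->->.
rewrite /Zval; under eq_bigr => A sAP.
  rewrite (eq_bigr _ (fun a _ => updateE D Q a)) big_split mulrDr hits_restrict //.
  over.
rewrite big_split /=; congr (_ + _).
rewrite /anticommb signr_odd [-1](_ : _ = 1 + -2) // -sum_subset_expr.
rewrite [RHS](eq_bigl (fun A => (A \subset supp P) && (A \subset conf Q P))) => [|A]; last first.
  by case sAc: (A \subset conf Q P); rewrite ?andbF ?andbT ?(subset_trans sAc (conf_subr Q P)).
by rewrite big_mkcondr; apply: eq_bigr => A _; case: (A \subset conf Q P); rewrite ?mulr1 ?mulr0.
Qed.
End Dictionary.

Lemma sum_sign_count (T : Type) (a : pred T) (s : seq T) :
  \sum_(x <- s) (-1) ^+ a x = (size s)%:Z - 2 * (count a s)%:Z.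
Proof.
elim: s => [|x s IHs]; first by rewrite big_nil.
by rewrite big_cons IHs /= -addn1 !PoszD; case: (a x); rewrite /= ?expr1 ?expr0; ring.
Qed.

Section Certify.
Variable n : nat.
Implicit Types (P Q : pstring n) (s prev rest : seq (pstring n)) (D : dict n).

Lemma anticommbC P Q : anticommb P Q = anticommb Q P.
Proof.
rewrite /anticommb (_ : conf P Q = conf Q P) //.
by apply/setP => j; rewrite !inE [Q j == P j]eq_sym andbCA.
Qed.

Lemma anticommb_refl P : ~~ anticommb P P.
Proof.
rewrite /anticommb (_ : conf P P = set0) ?cards0 //.
by apply/setP => j; rewrite !inE eqxx !andbF.
Qed.

Definition commuting s := pairwise (fun Q P => ~~ anticommb Q P) s.

Lemma commutingP s : commuting s <->
  (forall j i, (j < size s)%N -> (i < size s)%N ->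
     ~~ anticommb (nth (pid n) s j) (nth (pid n) s i)).
Proof.
split => [/(pairwiseP (pid n)) commute_lt j i lt_j lt_i | commute]; last first.
  by apply/(pairwiseP (pid n)) => j i lt_j lt_i _; apply: commute.
case: (ltngtP j i) => [ji | ij | ->]; last exact: anticommb_refl.
  exact: commute_lt.
by rewrite anticommbC commute_lt.
Qed.

Lemma cval_count D N prev P :
  (forall P', Zval D P' = \sum_(Q <- prev) (-1) ^+ anticommb Q P') ->
  N = (size prev)%:Z ->
  cval D N P = (count (fun Q => anticommb Q P) prev)%:R.
Proof.
move=> DZ ->; rewrite /cval DZ sum_sign_count.
rewrite (_ : _ - _ = 2 * (count (fun Q => anticommb Q P) prev)%:Z); last by ring.
by rewrite intrM mulrAC divff // mul1r.
Qed.

Lemma run_correct rest prev D N :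
  (forall P, Zval D P = \sum_(Q <- prev) (-1) ^+ anticommb Q P) ->
  N = (size prev)%:Z -> commuting prev ->
  (run D N prev rest = AllCommute <-> commuting (prev ++ rest)) /\
  (forall j i, run D N prev rest = Pair j i ->
     anticommb (nth (pid n) (prev ++ rest) j.-1) (nth (pid n) (prev ++ rest) i.-1)).
Proof.
elim: rest prev D N => [|P rest IHrest] prev D N DZ DN comm_prev; first by rewrite cats0.
rewrite /= (cval_count P DZ DN) ltr0n -has_count.
case: ifP => [has_anti | /negbT no_anti].
  rewrite /scan -has_find has_anti; split.
    split=> //; rewrite /commuting pairwise_cat => /and3P[/allrelP commute_rest _ _].
    have [Q Qprev] := hasP has_anti.
    by rewrite (negbTE (commute_rest Q P Qprev _)) ?mem_head.
  move=> j i [<- <-]; rewrite /= !nth_cat -has_find has_anti ltnn subnn.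
  exact: nth_find _ has_anti.
rewrite -cat_rcons; apply: IHrest => [P'||].
- by rewrite Zval_update DZ -cats1 big_cat big_seq1.
- by rewrite DN size_rcons -addn1 PoszD.
- rewrite /commuting pairwise_rcons; apply/andP; split=> //.
  by apply/allP => Q Qprev; apply: contra no_anti => anti_QP; apply/hasP; exists Q.
Qed.

End Certify.

(* The output Pair j i is 1-based: P^(j) = nth (pid n) Ps j.-1. *)
Theorem corollary1 (n : nat) (Ps : seq (pstring n)) :
  (certify Ps = AllCommute <->
     (forall j i : nat, (j < size Ps)%N -> (i < size Ps)%N ->
        ~~ anticommb (nth (pid n) Ps j) (nth (pid n) Ps i)))
  /\
  (forall j i : nat, certify Ps = Pair j i ->
     pmx (nth (pid n) Ps j.-1) *m pmx (nth (pid n) Ps i.-1)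
     = - (pmx (nth (pid n) Ps i.-1) *m pmx (nth (pid n) Ps j.-1))).
Proof.
have empty_Zval (P : pstring n) : Zval (fun _ => 0) P = \sum_(Q <- [::]) (-1) ^+ anticommb Q P.
  by rewrite big_nil /Zval big1 // => A _; rewrite big1 ?mulr0.
have [certify_all certify_pair] := run_correct Ps empty_Zval erefl isT.
split; first exact: iff_trans certify_all (commutingP Ps).
by move=> j i /certify_pair /= anti; rewrite pmx_mulmxC_sign anti scaleN1r.
Qed.
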